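(* Let $D\subset\mathbb N^n$ be finite, not contained in any coordinate hyperplane, $p$ a prime. Let $U\in E_{D,p}(r)$ and $U'\in E_{D,p}(r')$ be minimal with $\varphi_U(0)=\varphi_{U'}(0)$, and define $V=(v_{\mathbf d})$ by $v_{\mathbf d}=p^ru'_{\mathbf d}+u_{\mathbf d}$. Then $V$ is a minimal element of $E_{D,p}(r+r')$, and its support satisfies $\varphi_V(i)=\varphi_{U'}(i)$ for $0\le i\le r'$ and $\varphi_V(i+r')=\varphi_U(i)$ for $1\le i\le r-1$.
   Context: $s_p$ = base-$p$ digit sum. $E_{D,p}(r)$ = set of $U=(u_{\mathbf d})\in\{0,\dots,p^r-1\}^D$ with $\sum u_{\mathbf d}\mathbf d\equiv0\pmod{p^r-1}$ and all coordinates of $\sum u_{\mathbf d}\mathbf d$ positive; $s_p(U)=\sum s_p(u_{\mathbf d})$; $\delta_p(D)=\frac1{p-1}\min_{r\ge1}\min_{U\in E_{D,p}(r)}s_p(U)/r$; $U\in E_{D,p}(r)$ is minimal if $s_p(U)=(p-1)r\delta_p(D)$. Shift $\delta_r$: $k\mapsto pk\bmod(p^r-1)$ for $k\le p^r-2$, $p^r-1\mapsto p^r-1$, coordinatewise. For $U\in E_{D,p}(r)$, $\varphi_U:\mathbb Z/r\mathbb Z\to\mathbb N_{>0}^n$, $\varphi_U(k)=\frac1{p^r-1}\sum\mathbf d(\delta_r^kU)_{\mathbf d}$ (indices taken modulo $r$). *)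

From mathcomp Require Import all_boot.
Set Implicit Arguments. Unset Strict Implicit. Unset Printing Implicit Defensive.

(* Points of N^n are n-tuples of naturals. A finite set D of N^n is a
   duplicate-free sequence. A family U = (u_d)_{d in D} is a function
   n.-tuple nat -> nat, of which only the values on D matter. *)
Definition pt n := n.-tuple nat.

(* base-p digit sum: k has at most k+1 base-p digits when p >= 2 *)
Definition sp (p k : nat) : nat := \sum_(i < k.+1) (k %/ p ^ i) %% p.

Definition spU n (D : seq (pt n)) (p : nat) (U : pt n -> nat) : nat :=
  \sum_(d <- D) sp p (U d).

Definition wsum n (D : seq (pt n)) (U : pt n -> nat) (j : 'I_n) : nat :=
  \sum_(d <- D) U d * tnth d j.

Definition inE n (D : seq (pt n)) (p r : nat) (U : pt n -> nat) : Prop :=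
  0 < r /\
  (forall d, d \in D -> U d <= p ^ r - 1) /\
  (forall j : 'I_n, (p ^ r - 1 %| wsum D U j) /\ 0 < wsum D U j).

(* U in E_{D,p}(r) is minimal: s_p(U)/r attains the minimum of
   s_p(U')/r' over all r' >= 1 and U' in E_{D,p}(r'),
   i.e. s_p(U) = (p-1) r delta_p(D). *)
Definition minimalE n (D : seq (pt n)) (p r : nat) (U : pt n -> nat) : Prop :=
  inE D p r U /\
  forall (r' : nat) (U' : pt n -> nat), inE D p r' U' ->
    spU D p U * r' <= spU D p U' * r.

Definition shift (p r k : nat) : nat :=
  if k == p ^ r - 1 then k else (p * k) %% (p ^ r - 1).

Definition phi n (D : seq (pt n)) (p r : nat) (U : pt n -> nat) (k : nat)
  : {ffun 'I_n -> nat} :=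
  [ffun j => (\sum_(d <- D) iter (k %% r) (shift p r) (U d) * tnth d j)
              %/ (p ^ r - 1)].

From Pilot Require Import Defs.
From mathcomp Require Import all_boot zify.
Set Implicit Arguments. Unset Strict Implicit. Unset Printing Implicit Defensive.

(* On numbers w < p^R, read as strings of R base-p digits, the shift delta_R is
   the cyclic rotation of the digits (the string of all (p-1)'s, p^R - 1, is
   its fixed point).  Rotating by k places gives
     delta_R^k w = p^k w - (p^R - 1) floor(w / p^(R-k)),
   and summing against d yields
     phi_W(k) = p^k phi_W(0) - sum_d floor(w_d / p^(R-k)) d.
   The digit string of v_d is that of u'_d followed by that of u_d, so
   s_p(V) = s_p(U') + s_p(U) and V attains the minimal ratio.  As
   phi_U(0) = phi_U'(0), the carries floor(v_d / p^(r+r'-k)) are those of U'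
   when k <= r', and p^(k-r') u'_d plus those of U when k >= r'; this gives the
   two identities for phi_V. *)

Lemma ltn_radix x y A B : x < A -> y < B -> x * B + y < A * B.
Proof.
move=> xA yB; apply: (@leq_trans (x.+1 * B)); first by rewrite mulSn addnC ltn_add2r.
by rewrite leq_mul2r xA orbT.
Qed.

Lemma radix_eq_max x y A B : x < A -> y < B ->
  (x * B + y == A * B - 1) = (x == A.-1) && (y == B.-1).
Proof.
case: A => // A; case: B => // B xA yB /=.
have -> : A.+1 * B.+1 - 1 = A * B.+1 + B by rewrite mulSn addnC addnS subn1.
apply/eqP/andP => [e | [/eqP-> /eqP->] //].
have := congr1 (modn^~ B.+1) e; rewrite /= !modnMDl !modn_small // => yB'.
move: e; rewrite yB' => /addIn/eqP; rewrite eqn_mul2r /= => /eqP->.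
by split.
Qed.

Definition digit p k i := k %/ p ^ i %% p.

Lemma sum_digits_pad p k N m : 0 < p -> k < p ^ N ->
  \sum_(i < N + m) digit p k i = \sum_(i < N) digit p k i.
Proof.
move=> p_gt0 kN; rewrite big_split_ord /= [X in _ + X]big1 ?addn0 // => i _.
rewrite /digit divn_small ?mod0n //; apply: leq_trans kN _.
by rewrite leq_pexp2l // leq_addr.
Qed.

Lemma sp_sum_digits p k N : 1 < p -> k < p ^ N -> sp p k = \sum_(i < N) digit p k i.
Proof.
move=> p_gt1 kN; have p_gt0 := ltnW p_gt1.
have kk : k < p ^ k.+1 by apply: ltn_trans (ltn_expl k p_gt1) _; rewrite ltn_exp2l.
transitivity (\sum_(i < k.+1) digit p k i) => //.
by rewrite -(sum_digits_pad N p_gt0 kk) addnC sum_digits_pad.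
Qed.

Lemma digit_low p r a b i : 0 < p -> b < p ^ r -> i < r ->
  digit p (p ^ r * a + b) i = digit p b i.
Proof.
move=> p_gt0 br ir; rewrite /digit.
have -> : p ^ r * a = (p ^ (r - i.+1) * a * p) * p ^ i.
  have -> : p ^ r = p ^ (r - i.+1) * p * p ^ i.
    by rewrite -expnSr -expnD; congr (_ ^ _); lia.
  lia.
by rewrite divnMDl ?expn_gt0 ?p_gt0 // modnMDl.
Qed.

Lemma digit_high p r a b i : 0 < p -> b < p ^ r ->
  digit p (p ^ r * a + b) (r + i) = digit p a i.
Proof.
move=> p_gt0 br; rewrite /digit expnD divnMA mulnC divnMDl ?expn_gt0 ?p_gt0 //.
by rewrite (divn_small br) addn0.
Qed.

Lemma sp_add p r a b : 1 < p -> b < p ^ r ->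
  sp p (p ^ r * a + b) = sp p a + sp p b.
Proof.
move=> p_gt1 br; have p_gt0 := ltnW p_gt1.
have aa : a < p ^ a := ltn_expl a p_gt1.
have ab : p ^ r * a + b < p ^ (r + a).
  by rewrite expnD [p ^ r * a]mulnC [p ^ r * p ^ a]mulnC ltn_radix.
rewrite (sp_sum_digits p_gt1 ab) (sp_sum_digits p_gt1 aa) (sp_sum_digits p_gt1 br).
rewrite big_split_ord /= [RHS]addnC; congr (_ + _); apply: eq_bigr => i _ /=.
  exact: digit_low (ltn_ord i).
exact: digit_high.
Qed.

Section DigitRotation.

Variables p R : nat.
Hypothesis p_gt1 : 1 < p.

Let p_gt0 : 0 < p := ltnW p_gt1.

Definition drot i w := w %% p ^ (R - i) * p ^ i + w %/ p ^ (R - i).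

Lemma drot_carry i w : i <= R ->
  drot i w + (p ^ R - 1) * (w %/ p ^ (R - i)) = p ^ i * w.
Proof.
move=> iR; rewrite /drot [in RHS](divn_eq w (p ^ (R - i))).
have -> : p ^ R = p ^ (R - i) * p ^ i by rewrite -expnD subnK.
have : 0 < p ^ (R - i) * p ^ i by rewrite muln_gt0 !expn_gt0 p_gt0.
move: (p ^ (R - i)) (p ^ i) (w %/ _) (w %% _) => A B q s AB_gt0.
rewrite mulnBl mul1n; have : q <= A * B * q by rewrite leq_pmull.
lia.
Qed.

Lemma drot_mod i w : i <= R -> drot i w = p ^ i * w %[mod p ^ R - 1].
Proof. by move=> iR; rewrite -(drot_carry w iR) addnC mulnC modnMDl. Qed.

Lemma drot_lt i w : i <= R -> w < p ^ R -> drot i w < p ^ R.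
Proof.
move=> iR wR; have eR : p ^ R = p ^ (R - i) * p ^ i by rewrite -expnD subnK.
rewrite eR ltn_radix ?ltn_pmod ?expn_gt0 ?p_gt0 //.
by rewrite ltn_divLR ?expn_gt0 ?p_gt0 // mulnC -eR.
Qed.

Lemma drot_eq_max i w : i <= R -> w < p ^ R ->
  (drot i w == p ^ R - 1) = (w == p ^ R - 1).
Proof.
move=> iR wR; have eR : p ^ R = p ^ (R - i) * p ^ i by rewrite -expnD subnK.
have ew := divn_eq w (p ^ (R - i)); rewrite /drot.
set a := w %/ _ in ew *; set b := w %% _ in ew *.
have lo : b < p ^ (R - i) by rewrite ltn_pmod ?expn_gt0 ?p_gt0.
have hi : a < p ^ i by rewrite ltn_divLR ?expn_gt0 ?p_gt0 // mulnC -eR.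
clearbody a b; rewrite ew eR radix_eq_max // [p ^ (R - i) * _]mulnC radix_eq_max //.
exact: andbC.
Qed.

Lemma shift_drot i w : i < R -> w < p ^ R -> shift p R (drot i w) = drot i.+1 w.
Proof.
move=> iR wR; rewrite /shift drot_eq_max ?(ltnW iR) //.
case: eqP => [wM | /eqP wM].
  have /eqP-> : drot i w == p ^ R - 1 by rewrite drot_eq_max ?(ltnW iR) // wM.
  by apply/esym/eqP; rewrite drot_eq_max // wM.
have lt : drot i.+1 w < p ^ R - 1.
  have : drot i.+1 w != p ^ R - 1 by rewrite drot_eq_max.
  have := drot_lt iR wR; lia.
rewrite -(modn_small lt) drot_mod // expnS -mulnA -[LHS]modnMmr.
by rewrite drot_mod ?(ltnW iR) // modnMmr.
Qed.

Lemma iter_shift i w : i <= R -> w < p ^ R -> iter i (shift p R) w = drot i w.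
Proof.
move=> iR wR; elim: i iR => [|i IHi] iR.
  by rewrite /drot subn0 expn0 muln1 modn_small // divn_small // addn0.
by rewrite iterS IHi ?shift_drot // ltnW.
Qed.

Lemma iter_shift_mod k w : w < p ^ R ->
  iter (k %% R) (shift p R) w = iter k (shift p R) w.
Proof.
move=> wR; have period : iter R (shift p R) w = w.
  by rewrite iter_shift // /drot subnn expn0 modn1 divn1.
have periodic q : iter (q * R) (shift p R) w = w.
  by elim: q => //= q IHq; rewrite mulSn iterD IHq period.
by rewrite {2}(divn_eq k R) addnC iterD periodic.
Qed.

End DigitRotation.

Lemma phi_add_carry n (D : seq (pt n)) p R (W : pt n -> nat) k (j : 'I_n) c :
  1 < p -> 0 < R -> k <= R -> {in D, forall d, W d < p ^ R} ->
  wsum D W j = (p ^ R - 1) * c ->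
  phi D p R W k j + \sum_(d <- D) W d %/ p ^ (R - k) * tnth d j = p ^ k * c.
Proof.
move=> p_gt1 R_gt0 kR W_lt wsumW.
have M_gt0 : 0 < p ^ R - 1 by rewrite subn_gt0 -{1}(expn0 p) ltn_exp2l.
rewrite /phi ffunE.
set S := \sum_(d <- D) iter _ _ _ * _; set Q := \sum_(d <- D) _ %/ _ * _.
have key : Q * (p ^ R - 1) + S = p ^ k * c * (p ^ R - 1).
  rewrite [RHS]mulnAC -mulnA -wsumW /wsum big_distrr big_distrl -big_split /=.
  apply: eq_big_seq => d dD; rewrite iter_shift_mod ?W_lt // iter_shift ?W_lt //.
  by rewrite mulnAC -mulnDl addnC [_ * (p ^ R - 1)]mulnC drot_carry // mulnA.
have := congr1 (divn^~ (p ^ R - 1)) key.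
by rewrite /= divnMDl // !mulnK // addnC.
Qed.

Definition concat_digits n p r (U' U : pt n -> nat) (d : pt n) := p ^ r * U' d + U d.

Section Concatenation.

Variables (n : nat) (D : seq (pt n)) (p r r' : nat) (U U' : pt n -> nat).
Variable c : 'I_n -> nat.
Hypotheses (p_gt1 : 1 < p) (r_gt0 : 0 < r) (r'_gt0 : 0 < r').
Hypothesis U_lt : {in D, forall d, U d < p ^ r}.
Hypothesis U'_lt : {in D, forall d, U' d < p ^ r'}.
Hypothesis wsumU : forall j, wsum D U j = (p ^ r - 1) * c j.
Hypothesis wsumU' : forall j, wsum D U' j = (p ^ r' - 1) * c j.

Local Notation V := (concat_digits p r U' U).

Lemma concat_digits_lt : {in D, forall d, V d < p ^ (r + r')}.
Proof.
move=> d dD; rewrite /concat_digits expnD [p ^ r * U' d]mulnC [p ^ r * _]mulnC.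
by rewrite ltn_radix ?U_lt ?U'_lt.
Qed.

Lemma wsum_concat j : wsum D V j = p ^ r * wsum D U' j + wsum D U j.
Proof.
rewrite /wsum big_distrr -big_split /=; apply: eq_bigr => d _.
by rewrite mulnDl mulnA.
Qed.

Lemma wsum_concat_period j : wsum D V j = (p ^ (r + r') - 1) * c j.
Proof.
have pr_gt0 : 0 < p ^ r by rewrite expn_gt0 (ltnW p_gt1).
have pr'_gt0 : 0 < p ^ r' by rewrite expn_gt0 (ltnW p_gt1).
rewrite wsum_concat wsumU wsumU' expnD.
case: (p ^ r) pr_gt0 => // a _; case: (p ^ r') pr'_gt0 => // b _.
rewrite [a.+1 * b.+1]mulSn addSn !subn1 /=; lia.
Qed.

Lemma spU_concat : spU D p V = spU D p U' + spU D p U.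
Proof.
rewrite /spU -big_split /=; apply: eq_big_seq => d dD.
exact: sp_add (U_lt dD).
Qed.

Lemma inE_concat : (forall j, 0 < wsum D U j) -> Defs.inE D p (r + r') V.
Proof.
move=> wsumU_gt0; split; first by rewrite addn_gt0 r_gt0.
split=> [d /concat_digits_lt | j]; first by lia.
split; first by rewrite wsum_concat_period dvdn_mulr.
by rewrite wsum_concat; have := wsumU_gt0 j; lia.
Qed.

Lemma minimalE_concat :
  minimalE D p r U -> minimalE D p r' U' -> minimalE D p (r + r') V.
Proof.
move=> [[_ [_ wsumU_gt0]] U_min] [_ U'_min]; split.
  by apply: inE_concat => j; case: (wsumU_gt0 j).
move=> r'' W W_E; rewrite spU_concat.
have := U_min r'' W W_E; have := U'_min r'' W W_E; lia.
Qed.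

Lemma phi_concat_low i : i <= r' -> phi D p (r + r') V i = phi D p r' U' i.
Proof.
move=> ir'; apply/ffunP => j.
have := phi_add_carry p_gt1 (ltn_addr r' r_gt0) (leq_trans ir' (leq_addl r r'))
  concat_digits_lt (wsum_concat_period j).
have <- := phi_add_carry p_gt1 r'_gt0 ir' U'_lt (wsumU' j).
suff -> : \sum_(d <- D) V d %/ p ^ (r + r' - i) * tnth d j =
          \sum_(d <- D) U' d %/ p ^ (r' - i) * tnth d j by move/addIn.
apply: eq_big_seq => d dD; congr (_ * _).
rewrite -addnBA // expnD divnMA /concat_digits mulnC divnMDl ?expn_gt0 ?(ltnW p_gt1) //.
by rewrite (divn_small (U_lt dD)) addn0.
Qed.

Lemma phi_concat_high i : i <= r -> phi D p (r + r') V (i + r') = phi D p r U i.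
Proof.
move=> ir; apply/ffunP => j.
have := phi_add_carry p_gt1 (ltn_addr r' r_gt0) (leq_add ir (leqnn r'))
  concat_digits_lt (wsum_concat_period j).
have := phi_add_carry p_gt1 r_gt0 ir U_lt (wsumU j).
have -> : \sum_(d <- D) V d %/ p ^ (r + r' - (i + r')) * tnth d j =
          p ^ i * wsum D U' j + \sum_(d <- D) U d %/ p ^ (r - i) * tnth d j.
  rewrite /wsum big_distrr -big_split subnDr /=; apply: eq_big_seq => d dD.
  have -> : V d = p ^ i * U' d * p ^ (r - i) + U d.
    by rewrite /concat_digits -mulnA [U' d * _]mulnC mulnA -expnD subnKC.
  by rewrite divnMDl ?expn_gt0 ?(ltnW p_gt1) // mulnDl mulnA.
rewrite wsumU' expnD; have : 0 < p ^ r' by rewrite expn_gt0 (ltnW p_gt1).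
case: (p ^ r') => // b _; rewrite subn1 /=; lia.
Qed.

End Concatenation.

Lemma inE_lt n (D : seq (pt n)) p R (W : pt n -> nat) :
  0 < p -> Defs.inE D p R W -> {in D, forall d, W d < p ^ R}.
Proof.
move=> p_gt0 [_ [W_le _]] d /W_le; have : 0 < p ^ R by rewrite expn_gt0 p_gt0.
lia.
Qed.

Lemma wsum_phi0 n (D : seq (pt n)) p R (W : pt n -> nat) j :
  p ^ R - 1 %| wsum D W j -> wsum D W j = (p ^ R - 1) * phi D p R W 0 j.
Proof. by move=> dvd; rewrite /phi ffunE mod0n mulnC divnK. Qed.

Theorem lemma2p12 (n : nat) (D : seq (pt n)) (p r r' : nat)
    (U U' : pt n -> nat) :
  uniq D ->
  (forall j : 'I_n, exists2 d, d \in D & tnth d j != 0) ->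
  prime p ->
  minimalE D p r U -> minimalE D p r' U' ->
  phi D p r U 0 = phi D p r' U' 0 ->
  let V := fun d => p ^ r * U' d + U d in
  minimalE D p (r + r') V /\
  (forall i, i <= r' -> phi D p (r + r') V i = phi D p r' U' i) /\
  (forall i, 1 <= i <= r - 1 -> phi D p (r + r') V (i + r') = phi D p r U i).
Proof.
move=> _ _ /prime_gt1 p_gt1 U_min U'_min phi0 V.
have [[r_gt0 [_ U_period]] _] := U_min; have [[r'_gt0 [_ U'_period]] _] := U'_min.
have U_lt := inE_lt (ltnW p_gt1) U_min.1.
have U'_lt := inE_lt (ltnW p_gt1) U'_min.1.
pose c := phi D p r U 0.
have wsumU j : wsum D U j = (p ^ r - 1) * c j.
  by apply: wsum_phi0; case: (U_period j).
have wsumU' j : wsum D U' j = (p ^ r' - 1) * c j.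
  by rewrite /c phi0; apply: wsum_phi0; case: (U'_period j).
split; first exact: (minimalE_concat p_gt1 r_gt0 r'_gt0 U_lt U'_lt wsumU wsumU').
split=> [i ir' | i /andP[_ ir]].
  exact: (phi_concat_low p_gt1 r_gt0 r'_gt0 U_lt U'_lt wsumU wsumU').
apply: (phi_concat_high p_gt1 r_gt0 r'_gt0 U_lt U'_lt wsumU wsumU').
exact: leq_trans ir (leq_subr 1 r).
Qed.
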